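(* Let $K\subseteq[0,1]^n$ be compact and $\epsilon>0$. If $t\ge \log(8n)/(2\epsilon^2)$, then for every $p\in K$ and every measurable set $A\subseteq[0,1]^n$, $$\mathbb{P}_p[Y_{t,\epsilon}\in A]\le 2\,\mathbb{P}_p[\bar X_t\in A].$$
   Context: For $p\in[0,1]^n$, let $X_1,X_2,\dots$ be i.i.d. random vectors in $\{0,1\}^n$ whose coordinates $X_{s,i}$ are independent Bernoulli($p_i$) variables, and $\bar X_t=(X_1+\dots+X_t)/t$; $\mathbb{P}_p$ denotes probability under this law. For $K\subseteq\mathbb{R}^n$, $\mathcal{B}_\infty(K,\epsilon)=\{x\in\mathbb{R}^n:\exists q\in K,\ \|x-q\|_\infty<\epsilon\}$. $Y_{t,\epsilon}$ is a random variable with the conditional law of $\bar X_t$ given $\bar X_t\in\mathcal{B}_\infty(K,\epsilon)$, i.e. $\mathbb{P}_p[Y_{t,\epsilon}\in A]=\mathbb{P}_p[\bar X_t\in A\mid \bar X_t\in\mathcal{B}_\infty(K,\epsilon)]$. *)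

From HB Require Import structures.
From mathcomp Require Import all_boot all_order all_algebra.
From mathcomp Require Import all_classical all_reals all_analysis.
Set Implicit Arguments. Unset Strict Implicit. Unset Printing Implicit Defensive.
Import Order.TTheory GRing.Theory Num.Theory.
Import numFieldNormedType.Exports.
Local Open Scope classical_set_scope.
Local Open Scope ring_scope.

Section Defs.
Variables (R : realType) (n t : nat).

Definition unit_cube : set 'rV[R]_n :=
  [set x | forall i : 'I_n, 0 <= x ord0 i <= 1].

Definition Binf (K : set 'rV[R]_n) (eps : R) : set 'rV[R]_n :=
  [set x | exists2 q, K q & forall i : 'I_n, `|x ord0 i - q ord0 i| < eps].

(* Canonical sample space for X_1, ..., X_t: an outcome w assigns to each
   time s < t and coordinate i < n the bit X_{s+1,i} = w (s, i). *)
Definition outcome := {ffun 'I_t * 'I_n -> bool}.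

Definition weight (p : 'rV[R]_n) (w : outcome) : R :=
  \prod_(si : 'I_t * 'I_n) (if w si then p ord0 si.2 else 1 - p ord0 si.2).

Definition Xbar (w : outcome) : 'rV[R]_n :=
  \row_(i < n) ((\sum_(s < t) (w (s, i))%:R) / t%:R).

Definition PXbar (p : 'rV[R]_n) (A : set 'rV[R]_n) : R :=
  \sum_(w : outcome) (if `[< A (Xbar w) >] then weight p w else 0).

(* P_p[ Y_{t,eps} \in A ] = P_p[ \bar X_t \in A | \bar X_t \in B_oo(K,eps) ] *)
Definition PY (K : set 'rV[R]_n) (eps : R) (p : 'rV[R]_n) (A : set 'rV[R]_n) : R :=
  PXbar p (A `&` Binf K eps) / PXbar p (Binf K eps).

End Defs.

From HB Require Import structures.
From mathcomp Require Import all_boot all_order all_algebra.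
From mathcomp Require Import all_classical all_reals all_analysis.
From mathcomp Require Import ring lra.
Import Order.TTheory GRing.Theory Num.Theory.
Import numFieldNormedType.Exports.
Local Open Scope classical_set_scope.
Local Open Scope ring_scope.

(* Each coordinate of the empirical mean deviates from [p_i] by at least [eps]
   in a given direction with probability at most [exp (-2 t eps^2)]: this is
   the Chernoff bound combined with Hoeffding's lemma
   [E exp (l (X - p)) <= exp (l^2 / 8)] for a Bernoulli(p) variable [X].
   Since [p] itself lies in [K], leaving [B_oo(K, eps)] forces one of these
   [2 n] deviations, so by the choice of [t] the event [B_oo(K, eps)] has
   probability at least [1 - 2 n exp (-2 t eps^2) >= 3/4].  Conditioning on an
   event of probability at least [1/2] at most doubles probabilities. *)

Lemma is_derive_ge0_le {R : realType} {f f' : R -> R} {a b : R} :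
  (forall x : R, is_derive x 1 f (f' x)) ->
  (forall x, a < x < b -> 0 <= f' x) -> a <= b -> f a <= f b.
Proof.
move=> f_derive f'_ge0 ab.
apply: (@ger0_derive1_le_cc _ f a b) => //.
- move=> x; rewrite in_itv /= derive1E.
  by rewrite (@derive_val _ _ _ _ _ _ _ (f_derive x)) => /f'_ge0.
- apply: continuous_subspaceT => x.
  by case: (f_derive x) => /derivable1_diffP/differentiable_continuous.
- by rewrite in_itv /= lexx ab.
- by rewrite in_itv /= lexx ab.
Qed.

Lemma is_derive_sign_min {R : realType} {f f' : R -> R} {c x : R} :
  (forall y : R, is_derive y 1 f (f' y)) ->
  (forall y, y < c -> f' y <= 0) -> (forall y, c < y -> 0 <= f' y) ->
  f c <= f x.
Proof.
move=> f_derive f'_le0 f'_ge0; have [cx | xc] := leP c x.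
  by apply: (is_derive_ge0_le f_derive _ cx) => y /andP[/f'_ge0].
rewrite -lerN2.
apply: (@is_derive_ge0_le _ (fun y => - f y) (fun y => - f' y) _ _ _ _
  (ltW xc)).
by move=> y /andP[_ /f'_le0]; rewrite /= oppr_ge0.
Qed.

Definition centered_bernoulli_mgf {R : realType} (p l : R) :=
  p * expR (l * (1 - p)) + (1 - p) * expR (- (l * p)).

Section HoeffdingLemma.
Variables (R : realType) (p : R).
Hypothesis p01 : 0 <= p <= 1.

(* [slack l >= 0] is Hoeffding's lemma after taking logarithms.  Its
   derivative [gap] vanishes at [0] and is nondecreasing, because [tilt x] is
   a probability and hence [tilt x * (1 - tilt x) <= 1/4]. *)
Let mgf (x : R) : R := 1 - p + p * expR x.
Let tilt x := p * expR x / mgf x.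
Let gap x := x / 4 + p - tilt x.
Let slack x := x ^+ 2 / 8 + x * p - ln (mgf x).

Let mgf_gt0 x : 0 < mgf x.
Proof. have := expR_gt0 x; case/andP: p01 => p0 p1; rewrite /mgf; nra. Qed.

Let is_derive_mgf (x : R) : is_derive x 1 mgf (p * expR x).
Proof. by rewrite /mgf; apply: is_derive_eq; rewrite add0r mul1r. Qed.

Let is_derive_tilt (x : R) : is_derive x 1 tilt (tilt x * (1 - tilt x)).
Proof.
(* [is_derive_eq] leaves the derivative to instance resolution, which also
   uses the [is_derive] facts in the context. *)
have mgfV := is_deriveV (lt0r_neq0 (mgf_gt0 x)) (is_derive_mgf x).
have mgf_pos := mgf_gt0 x.
rewrite /tilt; apply: is_derive_eq; rewrite /mgf /GRing.scale /= in mgf_pos *.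
field; lra.
Qed.

Let is_derive_gap (x : R) : is_derive x 1 gap (4^-1 - tilt x * (1 - tilt x)).
Proof.
have tilt' := is_derive_tilt x.
by rewrite /gap; apply: is_derive_eq; rewrite /GRing.scale /=; ring.
Qed.

Let is_derive_slack (x : R) : is_derive x 1 slack (gap x).
Proof.
have ln_mgf' := is_derive1_comp (is_derive1_ln (mgf_gt0 x)) (is_derive_mgf x).
have mgf_pos := mgf_gt0 x.
rewrite /slack; apply: is_derive_eq; rewrite /gap /tilt /GRing.scale /=.
field; lra.
Qed.

Let tilt_var_le (x : R) : tilt x * (1 - tilt x) <= 4^-1.
Proof. have := sqr_ge0 (tilt x - 2^-1); nra. Qed.

Let gap_le (a b : R) : a <= b -> gap a <= gap b.
Proof.
move=> ab; apply: (is_derive_ge0_le is_derive_gap _ ab) => x _.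
by rewrite subr_ge0 tilt_var_le.
Qed.

Let slack_ge0 (x : R) : 0 <= slack x.
Proof.
have gap0 : gap 0 = 0.
  by rewrite /gap /tilt /mgf expR0 mulr1 subrK divr1; lra.
have -> : 0 = slack 0 by rewrite /slack /mgf expR0 mulr1 subrK ln1; lra.
apply: (is_derive_sign_min is_derive_slack) => y y0; rewrite -gap0;
  exact/gap_le/ltW.
Qed.

Lemma centered_bernoulli_mgf_ge0 (l : R) : 0 <= centered_bernoulli_mgf p l.
Proof.
rewrite /centered_bernoulli_mgf; case/andP: p01 => p_ge0 p_le1.
by apply: addr_ge0; apply: mulr_ge0; rewrite ?subr_ge0 ?expR_ge0.
Qed.

Lemma hoeffding_bernoulli (l : R) :
  centered_bernoulli_mgf p l <= expR (l ^+ 2 / 8).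
Proof.
have -> : centered_bernoulli_mgf p l = expR (- (l * p) + ln (mgf l)).
  rewrite expRD lnK ?posrE ?mgf_gt0 // /mgf /centered_bernoulli_mgf.
  by rewrite mulrBr mulr1 expRD; ring.
by rewrite ler_expR; have := slack_ge0 l; rewrite /slack; lra.
Qed.

End HoeffdingLemma.

Lemma prod_pair {R : comPzSemiRingType} {I J : finType} (F : I * J -> R) :
  \prod_ij F ij = \prod_i \prod_j F (i, j).
Proof. by rewrite pair_big; apply: eq_bigr => -[]. Qed.

Section ProductLaw.
Context {R : realType} {n t : nat} {p : 'rV[R]_n}.

Lemma sum_outcome_prod (G : 'I_t * 'I_n -> bool -> R) :
  \sum_(w : outcome n t) \prod_si G si (w si)
  = \prod_si (G si true + G si false).
Proof.
by rewrite -bigA_distr_bigA /=; apply: eq_bigr => si _; rewrite big_bool.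
Qed.

Lemma centered_sum_Xbar (w : outcome n t) (i : 'I_n) : (0 < t)%N ->
  \sum_(s < t) ((w (s, i))%:R - p ord0 i) = t%:R * (Xbar R w ord0 i - p ord0 i).
Proof.
move=> t_gt0; have t_neq0 : t%:R != 0 :> R by rewrite pnatr_eq0 -lt0n.
by rewrite sumrB sumr_const card_ord mxE mulrBr mulrCA divff // mulr1 mulr_natl.
Qed.

Lemma sum_weight_expR (i : 'I_n) (l : R) :
  \sum_(w : outcome n t)
     weight p w * expR (l * \sum_(s < t) ((w (s, i))%:R - p ord0 i))
  = centered_bernoulli_mgf (p ord0 i) l ^+ t.
Proof.
pose c (si : 'I_t * 'I_n) (b : bool) :=
  if si.2 == i then expR (l * ((b : nat)%:R - p ord0 i)) else 1.
pose G si b := (if b then p ord0 si.2 else 1 - p ord0 si.2) * c si b.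
have weight_expR (w : outcome n t) :
    weight p w * expR (l * \sum_(s < t) ((w (s, i))%:R - p ord0 i))
    = \prod_si G si (w si).
  rewrite /G [RHS]big_split /=; congr (_ * _).
  rewrite mulr_sumr expR_sum prod_pair.
  apply: eq_bigr => s _; rewrite (bigD1 i) //= big1 ?mulr1 /c /= ?eqxx //.
  by move=> j /negbTE ->.
rewrite (eq_bigr _ (fun w _ => weight_expR w)) sum_outcome_prod prod_pair.
rewrite -[t in RHS]card_ord -prodr_const; apply: eq_bigr => s _.
rewrite (bigD1 i) //= big1 ?mulr1.
  by rewrite /G /c /= eqxx /centered_bernoulli_mgf mulr1n mulr0n sub0r mulrN.
by move=> j /negbTE j_neq_i; rewrite /G /c /= j_neq_i !mulr1 subrKC.
Qed.

Hypothesis p_cube : unit_cube p.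

Lemma weight_ge0 (w : outcome n t) : 0 <= weight p w.
Proof.
apply: prodr_ge0 => si _; have /andP[p_ge0 p_le1] := p_cube si.2.
by case: (w si); lra.
Qed.

Lemma sum_weight : \sum_(w : outcome n t) weight p w = 1.
Proof.
rewrite /weight (sum_outcome_prod (fun si b => if b then _ else _)).
by rewrite big1 // => si _; rewrite subrKC.
Qed.

Lemma PXbar_ge0 (A : set 'rV[R]_n) : 0 <= PXbar t p A.
Proof. by apply: sumr_ge0 => w _; case: ifP => _ //; exact: weight_ge0. Qed.

Lemma PXbar_sub {A B : set 'rV[R]_n} : A `<=` B -> PXbar t p A <= PXbar t p B.
Proof.
move=> AB; apply: ler_sum => w _.
case: asboolP => [/AB Bw | _]; first by rewrite asboolT.
by case: ifP => _ //; exact: weight_ge0.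
Qed.

Lemma PXbar_setC (A : set 'rV[R]_n) : PXbar t p (~` A) = 1 - PXbar t p A.
Proof.
rewrite -sum_weight /PXbar -sumrB; apply: eq_bigr => w _.
by rewrite /setC /= asbool_neg; case: asboolP => _ /=; rewrite ?subrr ?subr0.
Qed.

Lemma PXbar_le_sum (f : outcome n t -> R) {A : set 'rV[R]_n} :
  (forall w, 0 <= f w) -> (forall w, A (Xbar R w) -> 1 <= f w) ->
  PXbar t p A <= \sum_(w : outcome n t) weight p w * f w.
Proof.
move=> f_ge0 f_ge1; apply: ler_sum => w _; case: asboolP => [/f_ge1 | _].
  by rewrite -{1}[weight p w]mulr1; apply: ler_wpM2l; first exact: weight_ge0.
by apply: mulr_ge0; [exact: weight_ge0 | exact: f_ge0].
Qed.

Lemma PXbar_sub_bigcup {I : finType} {F : I -> set 'rV[R]_n} {A} :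
  A `<=` \bigcup_i F i -> PXbar t p A <= \sum_i PXbar t p (F i).
Proof.
move=> AF.
pose f (w : outcome n t) : R := \sum_i if `[< F i (Xbar R w) >] then 1 else 0.
have f_ge0 w : 0 <= f w by apply: sumr_ge0 => i _; case: ifP.
apply: (le_trans (PXbar_le_sum f f_ge0 _)).
  move=> w /AF[i _ Fi]; rewrite /f (bigD1 i) //= asboolT // lerDl.
  by apply: sumr_ge0 => j _; case: ifP.
rewrite /f; under eq_bigr do rewrite mulr_sumr.
rewrite exchange_big /=; apply: ler_sum => i _; apply: ler_sum => w _.
by case: ifP; rewrite ?mulr1 ?mulr0.
Qed.

Lemma PXbar_deviation_le (i : 'I_n) (sg : bool) (eps : R) :
  (0 < t)%N -> 0 <= eps ->
  PXbar t p [set x | eps <= (-1) ^+ sg * (x ord0 i - p ord0 i)]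
  <= expR (- (2 * t%:R * eps ^+ 2)).
Proof.
move=> t_gt0 eps_ge0; set s : R := (-1) ^+ sg.
(* Chernoff bound with [l = 4 eps s], minimising [t l^2 / 8 - t l s eps]. *)
set l := 4 * eps * s.
have t_ge0 : 0 <= t%:R :> R by [].
pose f (w : outcome n t) :=
  expR (l * \sum_(s < t) ((w (s, i))%:R - p ord0 i) - 4 * t%:R * eps ^+ 2).
apply: (le_trans (PXbar_le_sum f (fun w => expR_ge0 _) _)).
  move=> w /= dev.
  have dev_t : 0 <= (s * (Xbar R w ord0 i - p ord0 i) - eps) * (eps * t%:R).
    by rewrite mulr_ge0 ?subr_ge0 // mulr_ge0.
  by rewrite -expR0 ler_expR centered_sum_Xbar // subr_ge0 /l; nra.
rewrite /f; under eq_bigr do rewrite expRD mulrA.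
rewrite -mulr_suml sum_weight_expR.
have /andP[p_ge0 p_le1] := p_cube i.
have mgf_le :
    centered_bernoulli_mgf (p ord0 i) l ^+ t <= expR (t%:R * (l ^+ 2 / 8)).
  rewrite expRM_natl; apply: lerXn2r; rewrite ?nnegrE ?expR_ge0 //.
    exact: centered_bernoulli_mgf_ge0.
  exact: hoeffding_bernoulli.
apply: le_trans (ler_wpM2r (expR_ge0 _) mgf_le) _.
rewrite -expRD ler_expR /l exprMn sqrr_sign; lra.
Qed.

Lemma PXbar_Binf_ge {K : set 'rV[R]_n} {eps : R} :
  K p -> (0 < t)%N -> 0 <= eps ->
  1 - 2 * n%:R * expR (- (2 * t%:R * eps ^+ 2)) <= PXbar t p (Binf K eps).
Proof.
move=> Kp t_gt0 eps_ge0.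
pose F (ij : 'I_n * bool) :=
  [set x : 'rV[R]_n | eps <= (-1) ^+ ij.2 * (x ord0 ij.1 - p ord0 ij.1)].
have notB_dev : ~` Binf K eps `<=` \bigcup_ij F ij.
  move=> x notB; have [i dev] : exists i, eps <= `|x ord0 i - p ord0 i|.
    apply: contrapT => nodev; apply: notB; exists p => // i.
    by rewrite ltNge; apply/negP => dev; apply: nodev; exists i.
  by exists (i, x ord0 i - p ord0 i < 0) => //; rewrite /F /= -normrEsign.
have := PXbar_sub_bigcup notB_dev; rewrite PXbar_setC.
have tails : \sum_ij PXbar t p (F ij)
    <= \sum_(ij : 'I_n * bool) expR (- (2 * t%:R * eps ^+ 2)).
  by apply: ler_sum => ij _; exact: PXbar_deviation_le.
rewrite sumr_const card_prod card_ord card_bool in tails.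
rewrite -[_ *+ (n * 2)]mulr_natr natrM in tails.
lra.
Qed.

Lemma PXbar_cond_le {A B : set 'rV[R]_n} : 2^-1 <= PXbar t p B ->
  PXbar t p (A `&` B) / PXbar t p B <= 2 * PXbar t p A.
Proof.
move=> PB; rewrite ler_pdivrMr; last lra.
have := PXbar_sub (@subIsetl _ A B); have := PXbar_ge0 A; nra.
Qed.

End ProductLaw.

Lemma union_tail_le {R : realType} {n : nat} {t eps : R} :
  (0 < n)%N -> 0 < eps -> ln (8 * n%:R) / (2 * eps ^+ 2) <= t ->
  2 * n%:R * expR (- (2 * t * eps ^+ 2)) <= 4^-1.
Proof.
move=> n_gt0 eps_gt0 t_large.
have n_ge1 : 1 <= n%:R :> R by rewrite ler1n.
have eps2_gt0 : 0 < 2 * eps ^+ 2 by rewrite mulr_gt0 // exprn_gt0.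
have tail : expR (- (2 * t * eps ^+ 2)) <= (8 * n%:R)^-1.
  rewrite -[X in _ <= X^-1](@lnK _ (8 * n%:R)) ?posrE; last lra.
  rewrite -expRN ler_expR lerN2.
  by move: t_large; rewrite ler_pdivrMr //; nra.
have -> : 4^-1 = 2 * n%:R * (8 * n%:R)^-1 :> R by field; lra.
by apply: ler_wpM2l tail; lra.
Qed.

Theorem lemma7 (R : realType) (n t : nat) (K : set 'rV[R]_n) (eps : R) :
  (0 < n)%N ->
  compact K ->
  K `<=` @unit_cube R n ->
  0 < eps ->
  ln (8 * n%:R) / (2 * eps ^+ 2) <= t%:R ->
  forall (p : 'rV[R]_n), K p ->
  forall (A : set 'rV[R]_n), A `<=` @unit_cube R n ->
  @PY R n t K eps p A <= 2 * @PXbar R n t p A.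
Proof.
move=> n_gt0 _ K_cube eps_gt0 t_large p Kp A _.
have n_ge1 : 1 <= n%:R :> R by rewrite ler1n.
have t_gt0 : (0 < t)%N.
  rewrite -(ltr0n R); apply: lt_le_trans t_large; apply: divr_gt0.
    by apply: ln_gt0; lra.
  by rewrite mulr_gt0 // exprn_gt0.
apply: (PXbar_cond_le (K_cube p Kp)).
have := PXbar_Binf_ge (K_cube p Kp) Kp t_gt0 (ltW eps_gt0).
have := union_tail_le n_gt0 eps_gt0 t_large.
lra.
Qed.
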